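(* Let $N>0$ be an integer and $z$ a nonzero complex number (or indeterminate). Let $X,Y,Z$ be formal variables and let $\alpha,\beta$ satisfy $\alpha+\beta=X+Y$, $\alpha\beta=Z$. Then, as formal power series in $X,Y,Z$, \[ \Phi_0^{(N)}(X,Y,Z;z)=\frac{1}{Z-XY} \left\{{}_{2}F_{1}^{(N)}\left(\begin{matrix}\alpha-X,\beta-X\\ 1-X\end{matrix};z\right)-1\right\}, \] where the right-hand side is understood as follows: each term with $m\ge1$ of ${}_{2}F_{1}^{(N)}$ contains the factor $(\alpha-X)(\beta-X)=Z-XY$, so the division is exact, the result is symmetric in $\alpha,\beta$ and hence expressible in $X,Y,Z$, and $1/(1-X)_m$ is expanded as a power series in $X$.
   Context: $(x)_m=x(x+1)\cdots(x+m-1)$ is the rising factorial, $(x)_0=1$. For integers $N>0$, define \[ {}_{2}F_{1}^{(N)}\left(\begin{matrix}a,b\\ c\end{matrix};z\right)=\sum_{m=0}^{N-1}\frac{(a)_m(b)_m}{(c)_m\, m!}\,\frac{(N-m)_m}{(Nz^{-1}-m)_m}. \] For ${\boldsymbol{k}}=(k_1,\ldots,k_r)\in\mathbb{Z}_{>0}^r$ define the truncated multiple polylogarithm \[ \mathrm{Li}_{\boldsymbol{k}}^{(N)}(z)=\sum_{0<m_1<\cdots<m_r<N}\frac{1}{m_1^{k_1}\cdots m_r^{k_r}}\frac{(N-m_r)_{m_r}}{(Nz^{-1}-m_r)_{m_r}}. \] For integers $k,r,h>0$ let $I_0(k,r,h)$ be the set of $(k_1,\ldots,k_r)\in\mathbb{Z}_{>0}^r$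 with $k_r>1$, $k_1+\cdots+k_r=k$ and $\#\{i\mid k_i>1\}=h$ (a finite set). Put $G_0^{(N)}(k,r,h;z)=\sum_{{\boldsymbol{k}}\in I_0(k,r,h)}\mathrm{Li}^{(N)}_{\boldsymbol{k}}(z)$ and \[ \Phi_0^{(N)}(X,Y,Z;z)=\sum_{k,r,h>0}G^{(N)}_0(k,r,h;z)\,X^{k-r-h}Y^{r-h}Z^{h-1}. \] *)

From mathcomp Require Import all_boot all_order all_algebra.
Set Implicit Arguments. Unset Strict Implicit. Unset Printing Implicit Defensive.
Import Order.TTheory GRing.Theory Num.Theory.
Local Open Scope ring_scope.

Section Defs.
Variable R : fieldType.

Definition rfac (x : R) (m : nat) : R := \prod_(i < m) (x + i%:R).

Definition tfac (N m : nat) (z : R) : R :=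
  rfac (N%:R - m%:R) m / rfac (N%:R / z - m%:R) m.

(* truncated multiple polylogarithm Li^{(N)}_k(z), k = (k_1,...,k_r) given as a
   sequence; the summation runs over 0 < m_1 < ... < m_r < N, i.e. over
   r-tuples m of elements of 'I_N such that 0 :: m is strictly increasing. *)
Definition Li (N : nat) (k : seq nat) (z : R) : R :=
  \sum_(m : (size k).-tuple 'I_N | sorted ltn (0%N :: map val m))
    (\prod_(i < size k) ((nth 0%N (map val m) i)%:R ^+ nth 0%N k i)^-1)
    * tfac N (last 0%N (map val m)) z.

(* I_0(k,r,h): tuples (k_1,...,k_r) of positive integers with k_r > 1,
   k_1+...+k_r = k and #{i | k_i > 1} = h.  Every entry is <= k, so these are
   enumerated as r-tuples of elements of 'I_(k+1). *)
Definition in_I0 (k r h : nat) (t : r.-tuple 'I_k.+1) : bool :=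
  [&& all (fun x => 0 < x)%N (map val t),
      (1 < last 0 (map val t))%N,
      (sumn (map val t) == k) &
      (count (fun x => 1 < x)%N (map val t) == h)].

Definition G0 (N k r h : nat) (z : R) : R :=
  \sum_(t : r.-tuple 'I_k.+1 | @in_I0 k r h t) Li N (map val t) z.

(* Coefficient of X^a Y^b Z^c in Phi_0^{(N)}(X,Y,Z;z): the only (k,r,h) with
   k-r-h = a, r-h = b, h-1 = c is k = a+b+2c+2, r = b+c+1, h = c+1. *)
Definition Phi0_coef (N : nat) (z : R) (a b c : nat) : R :=
  G0 N (a + b + 2 * c + 2) (b + c + 1) (c + 1) z.

(* Polynomials in X, Y, Z: T = R[X][Y][Z]; coefficient of X^a Y^b Z^c of p
   is p`_c`_b`_a. *)
Definition T := {poly {poly {poly R}}}.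
Definition cT (x : R) : T := x%:P%:P%:P.
Definition vX : T := 'X%:P%:P.
Definition vY : T := 'X%:P.
Definition vZ : T := 'X.
Definition coefT (p : T) (a b c : nat) : R := p`_c`_b`_a.

(* Truncation at order n in X of the power-series expansion of 1/(j - X):
   sum_{a <= n} X^a / j^(a+1). *)
Definition geomT (n j : nat) : T :=
  \sum_(a < n.+1) cT ((j%:R)^-1 ^+ a.+1) * vX ^+ a.

(* ((alpha - X + j)(beta - X + j)) written through alpha+beta = X+Y and
   alpha*beta = Z:  alpha*beta + (alpha+beta)(j - X) + (j - X)^2. *)
Definition pairfac (j : nat) : T :=
  vZ + (vX + vY) * (cT j%:R - vX) + (cT j%:R - vX) ^+ 2.

(* Truncation at order n in X of
   (1/(Z-XY)) { 2F1^{(N)}(alpha-X, beta-X; 1-X; z) - 1 }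
   = sum_{1<=m<N} [(alpha-X)_m (beta-X)_m / (Z-XY)] / ((1-X)_m m!) * tfac N m z,
   where (alpha-X)_m (beta-X)_m = prod_{j<m} pairfac j, pairfac 0 = Z - XY
   (exact division = dropping the j = 0 factor), and
   1/(1-X)_m = prod_{i<m} 1/((i+1) - X), each factor expanded in X. *)
Definition RHS_trunc (N : nat) (z : R) (n : nat) : T :=
  \sum_(1 <= m < N)
     cT (tfac N m z / (m`!)%:R)
     * (\prod_(1 <= j < m) pairfac j)
     * (\prod_(i < m) geomT n i.+1).

End Defs.

(* Expanding 1/(j - X) as a geometric series, the factor
   (alpha - X + j)(beta - X + j) of the m-th term of 2F1 combines with
   1/(j - X) into j (1 + G_j), where G_j = (Y + Z/(j - X))/j.  Modulo X^(n+1)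
   the right-hand side is therefore W_0, where
     W_p = sum_(p < m < N) t_m/(m (m - X)) prod_(p < j < m) (1 + G_j)
   and t_m is the truncation factor; W satisfies the recursion
     W_p = sum_(p < y < N) (t_y/(y (y - X)) + G_y W_y).
   The sums G_0 restricted to m_1 > p obey the same recursion, by splitting
   off the pair (k_1, m_1): k_1 = 1 contributes Y/m_1, k_1 = e + 2 contributes
   Z/m_1^(e+2), and at depth one t_y/y^(a+2) is the X^a-coefficient of
   t_y/(y (y - X)).  Induction on b + c compares the X^a Y^b Z^c coefficients.
   No property of t_m is used. *)

From mathcomp Require Import all_boot all_order all_algebra.
From mathcomp Require Import zify ring.
Set Implicit Arguments. Unset Strict Implicit. Unset Printing Implicit Defensive.
Import Order.TTheory GRing.Theory Num.Theory.
Local Open Scope ring_scope.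

Section SumSeqs.
Variable V : nmodType.

Fixpoint sum_seqs (K r : nat) (F : seq nat -> V) : V :=
  if r is r'.+1 then \sum_(x < K) sum_seqs K r' (fun s => F (val x :: s))
  else F [::].

Lemma sum_seqs_tuple K r (F : seq nat -> V) :
  \sum_(t : r.-tuple 'I_K) F (map val t) = sum_seqs K r F.
Proof.
elim: r F => [|r IHr] F /=.
  rewrite (eq_bigl (pred1 [tuple])) ?big_pred1_eq // => t.
  by apply/esym/eqP/val_inj; case: t => -[].
rewrite (reindex (fun p : 'I_K * r.-tuple 'I_K => [tuple of p.1 :: p.2])) /=.
  rewrite -(pair_bigA _ (fun x (t : r.-tuple _) => F (val x :: map val t))).
  by apply: eq_bigr => x _; apply: IHr.
exists (fun t : r.+1.-tuple 'I_K => (thead t, [tuple of behead t])).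
  by move=> [x t] _; congr (_, _); apply: val_inj.
by move=> t _; rewrite [in RHS](tuple_eta t).
Qed.

Lemma eq_sum_seqs K r (F G : seq nat -> V) :
  (forall s, size s = r -> F s = G s) -> sum_seqs K r F = sum_seqs K r G.
Proof.
elim: r F G => [|r IHr] F G eqFG /=; first exact: eqFG.
by apply: eq_bigr => x _; apply: IHr => s size_s; apply: eqFG; rewrite /= size_s.
Qed.

Lemma sum_seqs_eq0 K r (F : seq nat -> V) :
  (forall s, size s = r -> F s = 0) -> sum_seqs K r F = 0.
Proof.
move=> F0; rewrite (@eq_sum_seqs K r F (fun=> 0)) //.
by elim: r {F0} => [|r IHr] //=; rewrite big1.
Qed.

Lemma sum_seqs_sum K r I (s : seq I) (P : pred I) (F : I -> seq nat -> V) :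
  sum_seqs K r (fun u => \sum_(i <- s | P i) F i u) =
  \sum_(i <- s | P i) sum_seqs K r (F i).
Proof.
elim: r F => [|r IHr] F //=.
by under eq_bigr do rewrite IHr; rewrite exchange_big.
Qed.

End SumSeqs.

Lemma mulr_sum_seqs (S : pzSemiRingType) K r (c : S) (F : seq nat -> S) :
  c * sum_seqs K r F = sum_seqs K r (fun s => c * F s).
Proof.
elim: r F => [|r IHr] F //=.
by rewrite mulr_sumr; apply: eq_bigr => x _; rewrite IHr.
Qed.

Section PolylogSums.
Variable R : unitRingType.
Variable N : nat.
Variable t : nat -> R.

Definition G0_support (p k h : nat) (ks ms : seq nat) : bool :=
  [&& sorted ltn (p :: ms), all (fun x => 0 < x)%N ks, (1 < last 0 ks)%N,
      sumn ks == k & count (fun x => 1 < x)%N ks == h].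

Definition Li_term (ks ms : seq nat) : R :=
  (\prod_(i < size ks) ((nth 0%N ms i)%:R ^+ nth 0%N ks i)^-1) * t (last 0%N ms).

(* G0 with the general truncation weight [t], the smallest summation index
   m_1 restricted to [p < m_1], and the entries k_i restricted to [k_i < K]. *)
Definition G0_above (K p r k h : nat) : R :=
  sum_seqs K r (fun ks => sum_seqs N r (fun ms =>
    if G0_support p k h ks ms then Li_term ks ms else 0)).

Lemma G0_support_cons p k h x y ks ms : ks != [::] ->
  G0_support p k h (x :: ks) (y :: ms) =
  [&& (p < y)%N, (0 < x)%N, (x <= k)%N & ((1 < x) <= h)%N] &&
  G0_support y (k - x) (h - (1 < x)) ks ms.
Proof.
move=> ks_nil; rewrite /G0_support /=.
have -> : last x ks = last 0%N ks by case: ks ks_nil.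
have sum_eq u v w : (u + v == w)%N = (u <= w)%N && (v == w - u)%N.
  by apply/eqP/andP => [|[]/eqP]; lia.
rewrite !sum_eq.
by case: (p < y)%N; case: (0 < x)%N; case: (x <= k)%N; case: (_ <= h)%N;
  rewrite /= ?andbF.
Qed.

Lemma Li_term_cons x y ks ms : ms != [::] ->
  Li_term (x :: ks) (y :: ms) = (y%:R ^+ x)^-1 * Li_term ks ms.
Proof.
move=> ms_nil; rewrite /Li_term /= big_ord_recl /= mulrA.
by have -> : last y ms = last 0%N ms by case: ms ms_nil.
Qed.

Lemma G0_support_bounds p k h ks ms : G0_support p k h ks ms ->
  [&& (size ks + h <= k)%N, (h <= size ks)%N & (0 < h)%N].
Proof.
case/and5P=> _ ks_pos last_gt1 /eqP <- /eqP <-; rewrite count_size andbC /=.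
apply/andP; split.
  case: ks last_gt1 {ks_pos} => // x ks last_gt1.
  by rewrite -has_count; apply/hasP; exists (last x ks) => //; apply: mem_last.
elim: ks ks_pos {last_gt1} => //= x ks IHks /andP[x_pos /IHks].
by case: x x_pos => [|[|x]] //= _; lia.
Qed.

Lemma G0_above_eq0 K p r k h :
  ~~ [&& (r + h <= k)%N, (h <= r)%N & (0 < h)%N] -> G0_above K p r k h = 0.
Proof.
move=> bounds_fail; apply: sum_seqs_eq0 => ks size_ks.
apply: sum_seqs_eq0 => ms _; case: ifP => // /G0_support_bounds.
by rewrite size_ks => bounds; rewrite bounds in bounds_fail.
Qed.

Lemma G0_above_depth1 K p k : (1 < k < K)%N ->
  G0_above K p 1 k 1 = \sum_(p.+1 <= y < N) (y%:R ^+ k)^-1 * t y.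
Proof.
case/andP=> k_gt1 k_ltK.
rewrite /G0_above /= exchange_big big_geq_mkord [RHS]big_mkcond.
apply: eq_bigr => y _ /=; rewrite (bigD1 (Ordinal k_ltK)) //= big1 => [|x].
  rewrite /G0_support /Li_term /= big_ord1 !addn0 eqxx k_gt1 (ltnW k_gt1).
  by rewrite addr0 andbT; case: (p < y)%N.
rewrite -(inj_eq val_inj) /= => /negbTE x_neq_k.
by rewrite /G0_support /= addn0 x_neq_k !andbF.
Qed.

Lemma G0_above_cons K p r k h : (0 < r)%N ->
  G0_above K p r.+1 k h = \sum_(p.+1 <= y < N) \sum_(1 <= x < K)
    (y%:R ^+ x)^-1 * G0_above K y r (k - x) (h - (1 < x)).
Proof.
move=> r_gt0.
have nil_of_size (s : seq nat) : size s = r -> s != [::].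
  by move=> size_s; rewrite -size_eq0 size_s -lt0n.
have -> : G0_above K p r.+1 k h = \sum_(x < K) \sum_(y < N)
    if [&& (p < y)%N, (0 < x)%N, (x <= k)%N & ((1 < x) <= h)%N]
    then (y%:R ^+ x)^-1 * G0_above K y r (k - x) (h - (1 < x)) else 0.
  rewrite /G0_above /=; apply: eq_bigr => x _.
  rewrite sum_seqs_sum; apply: eq_bigr => y _.
  case: ifP => support_xy.
    rewrite mulr_sum_seqs; apply: eq_sum_seqs => ks /nil_of_size ks_nil.
    rewrite mulr_sum_seqs; apply: eq_sum_seqs => ms /nil_of_size ms_nil.
    rewrite G0_support_cons // support_xy Li_term_cons //.
    by rewrite /=; case: ifP; rewrite ?mulr0.
  apply: (sum_seqs_eq0 (V := R)) => ks /nil_of_size ks_nil.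
  apply: (sum_seqs_eq0 (V := R)) => ms _.
  by rewrite G0_support_cons // support_xy.
rewrite exchange_big big_geq_mkord [RHS]big_mkcond; apply: eq_bigr => y _ /=.
case: (p < y)%N; last by rewrite big1.
rewrite big_geq_mkord [RHS]big_mkcond; apply: eq_bigr => x _ /=.
case: (0 < x)%N => //; case: ifP => //= bounds_fail.
rewrite G0_above_eq0 ?mulr0 //; apply: contraFN bounds_fail => /and3P[].
by case: (1 < x)%N => /=; lia.
Qed.

End PolylogSums.

Lemma Li_sum_seqs (R : fieldType) N (ks : seq nat) (z : R) :
  Li N ks z = sum_seqs N (size ks) (fun ms =>
    if sorted ltn (0%N :: ms) then Li_term (fun m => tfac N m z) ks ms else 0).
Proof. by rewrite /Li big_mkcond -sum_seqs_tuple. Qed.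

Lemma G0_G0_above (R : fieldType) N k r h (z : R) :
  G0 N k r h z = G0_above N (fun m => tfac N m z) k.+1 0 r k h.
Proof.
transitivity (sum_seqs k.+1 r (fun ks =>
    if [&& all (fun x => 0 < x)%N ks, (1 < last 0 ks)%N, sumn ks == k
         & count (fun x => 1 < x)%N ks == h] then Li N ks z else 0)).
  by rewrite /G0 big_mkcond -sum_seqs_tuple.
apply: eq_sum_seqs => ks size_ks; rewrite Li_sum_seqs size_ks.
case: ifP => in_I0.
  by apply: eq_sum_seqs => ms _; rewrite /G0_support in_I0 andbT.
by apply/esym/sum_seqs_eq0 => ms _; rewrite /G0_support in_I0 andbF.
Qed.

Section TailSum.
Variable S : comPzSemiRingType.
Variable N : nat.
Variables f g h : nat -> S.

Definition tail_sum (p : nat) : S :=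
  \sum_(p.+1 <= m < N) f m * (\prod_(p.+1 <= j < m) (1 + g j)) * h m.

Lemma tail_sum_rec p :
  tail_sum p = \sum_(p.+1 <= y < N) (f y * h y + g y * tail_sum y).
Proof.
have [d] := ubnP (N - p); elim: d p => // d IHd p ltNp_d.
have [lt_pN | le_Np] := ltnP p.+1 N; last by rewrite /tail_sum !big_geq.
rewrite big_ltn // -IHd; last by lia.
rewrite /tail_sum big_ltn // big_geq // mulr1 -addrA; congr (_ + _).
rewrite addrC -[X in X + _]mul1r -mulrDl mulr_sumr.
apply: eq_big_nat => m /andP[lt_pm _].
by rewrite (big_ltn lt_pm) !mulrA (mulrC _ (1 + _)).
Qed.

End TailSum.

Section EqMod.
Variable S : comPzRingType.
Variable x : S.
Variable n : nat.

Definition eqmod (u v : S) : Prop := exists w, u = v + x ^+ n.+1 * w.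

Lemma eqmod_refl u : eqmod u u.
Proof. by exists 0; rewrite mulr0 addr0. Qed.

Lemma eqmodD u1 v1 u2 v2 :
  eqmod u1 v1 -> eqmod u2 v2 -> eqmod (u1 + u2) (v1 + v2).
Proof. by move=> [w1 ->] [w2 ->]; exists (w1 + w2); ring. Qed.

Lemma eqmodM u1 v1 u2 v2 :
  eqmod u1 v1 -> eqmod u2 v2 -> eqmod (u1 * u2) (v1 * v2).
Proof.
by move=> [w1 ->] [w2 ->]; exists (w1 * v2 + v1 * w2 + x ^+ n.+1 * w1 * w2); ring.
Qed.

Lemma eqmod_sum (I : eqType) (r : seq I) (P : pred I) (F G : I -> S) :
  (forall i, i \in r -> P i -> eqmod (F i) (G i)) ->
  eqmod (\sum_(i <- r | P i) F i) (\sum_(i <- r | P i) G i).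
Proof.
move=> eqFG; rewrite big_seq_cond [X in eqmod _ X]big_seq_cond.
by apply: (big_ind2 eqmod (eqmod_refl 0) eqmodD) => i /andP[]; apply: eqFG.
Qed.

Lemma eqmod_prod (I : eqType) (r : seq I) (P : pred I) (F G : I -> S) :
  (forall i, i \in r -> P i -> eqmod (F i) (G i)) ->
  eqmod (\prod_(i <- r | P i) F i) (\prod_(i <- r | P i) G i).
Proof.
move=> eqFG; rewrite big_seq_cond [X in eqmod _ X]big_seq_cond.
by apply: (big_ind2 eqmod (eqmod_refl 1) eqmodM) => i /andP[]; apply: eqFG.
Qed.

Lemma eqmod_geom u v : v * u = 1 ->
  eqmod ((v - x) * \sum_(a < n.+1) u ^+ a.+1 * x ^+ a) 1.
Proof.
move=> vu1; exists (- u ^+ n.+1).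
have -> : \sum_(a < n.+1) u ^+ a.+1 * x ^+ a = u * \sum_(a < n.+1) (u * x) ^+ a.
  by rewrite mulr_sumr; apply: eq_bigr => a _; rewrite exprMn exprS mulrA.
rewrite mulrA mulrBl vu1 -opprB mulNr (mulrC x) -subrX1 exprMn; ring.
Qed.

(* With x = X, u = 1/j and g = 1/(j - X): the factor
   (alpha - X + j)(beta - X + j) of [pairfac j], divided by j - X,
   is j (1 + (Y + Z/(j - X))/j). *)
Lemma eqmod_pair_ratio Y Z j u g : j * u = 1 -> eqmod ((j - x) * g) 1 ->
  eqmod ((Z + (x + Y) * (j - x) + (j - x) ^+ 2) * g) (j * (1 + u * (Y + Z * g))).
Proof.
move=> ju1 [w jg]; exists ((x + Y) * w + (j - x) * w).
have -> : j * (1 + u * (Y + Z * g)) = j + (j * u) * (Y + Z * g) by ring.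
rewrite ju1 mul1r.
have -> : (Z + (x + Y) * (j - x) + (j - x) ^+ 2) * g =
  Z * g + (x + Y) * ((j - x) * g) + (j - x) * ((j - x) * g) by ring.
rewrite jg; ring.
Qed.

End EqMod.

Section Coefficients.
Variable R : fieldType.
Implicit Types (p q : T R) (a b c : nat).

Lemma cTM (x y : R) : cT (x * y) = cT x * cT y.
Proof. by rewrite /cT !rmorphM. Qed.

Lemma cT1 : cT (1 : R) = 1.
Proof. by rewrite /cT !rmorph1. Qed.

Lemma cTX (x : R) k : cT (x ^+ k) = cT x ^+ k.
Proof. by rewrite /cT !rmorphXn. Qed.

Lemma cT_prod I (r : seq I) (P : pred I) (F : I -> R) :
  cT (\prod_(i <- r | P i) F i) = \prod_(i <- r | P i) cT (F i).
Proof. by rewrite /cT !rmorph_prod. Qed.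

Lemma coefTD p q a b c : coefT (p + q) a b c = coefT p a b c + coefT q a b c.
Proof. by rewrite /coefT !coefD. Qed.

Lemma coefT_sum I (r : seq I) (P : pred I) (F : I -> T R) a b c :
  coefT (\sum_(i <- r | P i) F i) a b c = \sum_(i <- r | P i) coefT (F i) a b c.
Proof. by rewrite /coefT !coef_sum. Qed.

Lemma coefTCM x p a b c : coefT (cT x * p) a b c = x * coefT p a b c.
Proof. by rewrite /coefT /cT !coefCM. Qed.

Lemma coefTYM p a b c :
  coefT (vY R * p) a b c = if b is b'.+1 then coefT p a b' c else 0.
Proof. by rewrite /coefT /vY coefCM coefXM; case: b => [|b] //=; rewrite coef0. Qed.

Lemma coefTZM p a b c :
  coefT (vZ R * p) a b c = if c is c'.+1 then coefT p a b c' else 0.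
Proof. by rewrite /coefT /vZ coefXM; case: c => [|c] //=; rewrite !coef0. Qed.

Lemma coefTXnM e p a b c :
  coefT (vX R ^+ e * p) a b c = if (e <= a)%N then coefT p (a - e) b c else 0.
Proof. by rewrite /coefT /vX -!rmorphXn !coefCM coefXnM ltnNge; case: leqP. Qed.

Lemma coefT1 a b c :
  coefT (1 : T R) a b c = if [&& a == 0, b == 0 & c == 0]%N then 1 else 0.
Proof.
rewrite /coefT coef1; case: c => [|c] /=; last by rewrite !coef0 !andbF.
rewrite coef1; case: b => [|b] /=; last by rewrite coef0 andbF.
by rewrite coef1; case: a.
Qed.

Lemma coefT_eqmod n p q a b c : eqmod (vX R) n p q -> (a <= n)%N ->
  coefT p a b c = coefT q a b c.
Proof. by move=> [w ->] le_an; rewrite coefTD coefTXnM ltnNge le_an addr0. Qed.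

Lemma coefT_geomTM n y p a b c : (a <= n)%N ->
  coefT (geomT R n y * p) a b c =
  \sum_(e < a.+1) (y%:R^-1) ^+ e.+1 * coefT p (a - e) b c.
Proof.
move=> le_an; rewrite /geomT mulr_suml coefT_sum.
rewrite [RHS](big_ord_widen n.+1
  (fun e => y%:R^-1 ^+ e.+1 * coefT p (a - e) b c)) //.
rewrite [RHS]big_mkcond; apply: eq_bigr => e _.
by rewrite -mulrA coefTCM coefTXnM ltnS; case: leqP; rewrite ?mulr0.
Qed.

End Coefficients.

Section PhiTail.
Variable R : fieldType.
Variable N : nat.
Variable t : nat -> R.
Variable n : nat.

(* [Gser y] = G_y and [Hser y] = 1/(y (y - X)), with 1/(y - X) expanded
   up to X^n. *)
Definition Gser (y : nat) : T R := cT (y%:R^-1) * (vY R + vZ R * geomT R n y).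
Definition Hser (y : nat) : T R := cT (y%:R^-1) * geomT R n y.
Definition Phi_tail (p : nat) : T R := tail_sum N (fun m => cT (t m)) Gser Hser p.

Lemma coefT_Phi_tail p a b c : (a <= n)%N ->
  coefT (Phi_tail p) a b c = \sum_(p.+1 <= y < N)
    (t y * (if (b == 0)%N && (c == 0)%N then (y%:R^-1) ^+ a.+2 else 0) +
     y%:R^-1 * ((if b is b'.+1 then coefT (Phi_tail y) a b' c else 0) +
       if c is c'.+1 then \sum_(e < a.+1)
         (y%:R^-1) ^+ e.+1 * coefT (Phi_tail y) (a - e) b c' else 0)).
Proof.
move=> le_an; rewrite /Phi_tail tail_sum_rec coefT_sum; apply: eq_bigr => y _.
rewrite coefTD coefTCM /Hser coefTCM -[geomT R n y]mulr1 coefT_geomTM //.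
rewrite big_ord_recr big1 /= => [|e _]; last first.
  by rewrite coefT1 subn_eq0 leqNgt ltn_ord /= mulr0.
rewrite coefT1 subnn add0r /Gser -mulrA coefTCM mulrDl coefTD coefTYM.
rewrite -mulrA coefTZM.
case: c => [|c] /=; last by rewrite andbF !mulr0 coefT_geomTM.
by case: b => [|b]; rewrite /= ?mulr0 // mulr1 -exprS.
Qed.

End PhiTail.

Section RHSReduction.
Variable R : fieldType.
Hypothesis char0 : [pchar R] =i pred0.
Variable n : nat.

Lemma natr_neq0 k : (0 < k)%N -> (k%:R : R) != 0.
Proof. by move/pcharf0P: char0 => ->; rewrite -lt0n. Qed.

Lemma cT_natrV j : (0 < j)%N -> cT (j%:R : R) * cT (j%:R^-1) = 1.
Proof. by move=> j_gt0; rewrite -cTM mulfV ?natr_neq0 ?cT1. Qed.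

Lemma pairfac_geomT j : (0 < j)%N ->
  eqmod (vX R) n (pairfac R j * geomT R n j) (cT j%:R * (1 + Gser R n j)).
Proof.
move=> j_gt0; apply: eqmod_pair_ratio (cT_natrV j_gt0) _.
rewrite /geomT; under eq_bigr do rewrite cTX.
exact/eqmod_geom/cT_natrV.
Qed.

Lemma fact_ratio (x : R) m : x / (m.+1`!)%:R * (m`!)%:R = x / m.+1%:R.
Proof.
by rewrite factS natrM invfM -!mulrA mulVf ?mulr1 // natr_neq0 ?fact_gt0.
Qed.

Lemma RHS_trunc_eqmod N z :
  eqmod (vX R) n (RHS_trunc N z n) (Phi_tail N (fun m => tfac N m z) n 0).
Proof.
rewrite /RHS_trunc /Phi_tail /tail_sum.
apply: eqmod_sum => -[|m]; rewrite mem_index_iota //= => _ _.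
set c := cT _; set G := Gser R n.
have -> : c * \prod_(1 <= j < m.+1) pairfac R j * \prod_(i < m.+1) geomT R n i.+1 =
    c * \prod_(1 <= j < m.+1) (pairfac R j * geomT R n j) * geomT R n m.+1.
  by rewrite big_split big_ord_recr /= !big_add1 !big_mkord /= !mulrA.
have -> : cT (tfac N m.+1 z) * \prod_(1 <= j < m.+1) (1 + G j) * Hser R n m.+1 =
    c * \prod_(1 <= j < m.+1) (cT j%:R * (1 + G j)) * geomT R n m.+1.
  rewrite big_split /= -cT_prod -natr_prod -fact_prod !mulrA -cTM fact_ratio cTM.
  by congr (_ * _); rewrite mulrAC.
apply: eqmodM (eqmod_refl _ _ _); apply: eqmodM (eqmod_refl _ _ _) _.
apply: eqmod_prod => j; rewrite mem_index_iota => /andP[j_gt0 _] _.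
exact: pairfac_geomT.
Qed.

End RHSReduction.

Section Agreement.
Variable R : fieldType.
Variable N : nat.
Variable t : nat -> R.
Variables n K : nat.

Definition coef_agree (b c : nat) : Prop :=
  forall a p, (a <= n)%N -> (a + b + 2 * c + 2 < K)%N ->
  G0_above N t K p (b + c + 1) (a + b + 2 * c + 2) (c + 1) =
  coefT (Phi_tail N t n p) a b c.

Lemma coef_agree00 : coef_agree 0 0.
Proof.
move=> a p le_an lt_aK; rewrite !addn0 G0_above_depth1 ?add0n; last by lia.
rewrite coefT_Phi_tail //; apply: eq_bigr => y _.
by rewrite addr0 mulr0 addr0 addn2 exprVn mulrC.
Qed.

Lemma coef_agreeY b c a y :
  (forall b', b = b'.+1 -> coef_agree b' c) ->
  (a <= n)%N -> (a + b + 2 * c + 2 < K)%N ->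
  G0_above N t K y (b + c) (a + b + 2 * c + 1) (c + 1) =
  if b is b'.+1 then coefT (Phi_tail N t n y) a b' c else 0.
Proof.
case: b => [_ | b IHb] le_an lt_kK.
  by rewrite G0_above_eq0 // add0n addn1 ltnn andbF.
rewrite -(IHb b) //; last by lia.
by congr G0_above; lia.
Qed.

Lemma coef_agreeZ b c a y :
  (forall c', c = c'.+1 -> coef_agree b c') ->
  (a <= n)%N -> (a + b + 2 * c + 2 < K)%N ->
  \sum_(2 <= x < K) (y%:R ^+ x)^-1 *
    G0_above N t K y (b + c) (a + b + 2 * c + 2 - x) (c + 1 - (1 < x)) =
  y%:R^-1 * if c is c'.+1 then \sum_(e < a.+1)
    (y%:R^-1) ^+ e.+1 * coefT (Phi_tail N t n y) (a - e) b c' else 0.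
Proof.
case: c => [_ | c IHc] le_an lt_kK.
  rewrite mulr0 big_nat big1 // => x /andP[lt_1x _].
  by rewrite lt_1x G0_above_eq0 ?mulr0 //= !andbF.
rewrite (big_cat_nat _ (n := a + 3)) /=; [|lia|lia].
rewrite [X in _ + X]big1_seq ?addr0 => [|x /andP[_]]; last first.
  rewrite mem_index_iota => /andP[le_ax _].
  rewrite (_ : 1 < x)%N; last by lia.
  by rewrite G0_above_eq0 ?mulr0 //; apply/negP => /and3P[+ _ _]; lia.
rewrite -{1}(add0n 2%N) (_ : a + 3 = a.+1 + 2)%N; last by lia.
rewrite big_addn addnK big_mkord.
rewrite mulr_sumr; apply: eq_bigr => -[e /= lt_ea] _.
rewrite addn2 -exprVn exprS -!mulrA; congr (_ * (_ * _)).
rewrite -(IHc c) //; try lia.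
by congr G0_above; lia.
Qed.

Lemma coef_agree_all b c : coef_agree b c.
Proof.
have [s] := ubnP (b + c); elim: s b c => // s IHs b c lt_bc_s.
have [/andP[/eqP-> /eqP->] | bc_neq0] := boolP ((b == 0) && (c == 0))%N.
  exact: coef_agree00.
move=> a p le_an lt_kK; rewrite coefT_Phi_tail // (negbTE bc_neq0).
rewrite addn1 G0_above_cons; last by case: b c bc_neq0 {lt_bc_s lt_kK} => [|b] [].
apply: eq_bigr => y _; rewrite mulr0 add0r (big_ltn (_ : 1 < K)%N); last by lia.
rewrite mulrDr expr1; congr (_ + _); last first.
  by apply: coef_agreeZ => // c' c_eq; apply: IHs; lia.
rewrite -(coef_agreeY (b := b) (c := c) (a := a) y) //.
- by congr (_ * G0_above _ _ _ _ _ _ _); lia.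
- by move=> b' b_eq; apply: IHs; lia.
Qed.

End Agreement.

Theorem theorem5p2 (R : fieldType) (hR : [pchar R] =i pred0)
    (N : nat) (z : R) :
  (0 < N)%N -> z != 0 ->
  forall n a b c : nat, (a <= n)%N ->
    coefT (RHS_trunc N z n) a b c = Phi0_coef N z a b c.
Proof.
move=> _ _ n a b c le_an.
rewrite (coefT_eqmod b c (RHS_trunc_eqmod hR n N z) le_an) /Phi0_coef G0_G0_above.
by symmetry; apply: coef_agree_all.
Qed.
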